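(* Let $\varepsilon\in[0,1)$ and $\mathcal{P},\mathcal{E}\subseteq\mathcal{D}(P)$. Then $$\beta C_{\mathrm{GPO},\varepsilon}(\mathcal{P},\mathcal{E})=D_{\max,\varepsilon}(\mathcal{P}\|\mathcal{E}).$$
   Context: All Hilbert spaces are finite-dimensional; $\mathcal{D}(P)$ is the set of density operators on $P$; $T(X,Y)=\tfrac12\|X-Y\|_1$; $\mathcal{B}_\varepsilon(\mathcal{P})=\{\omega\in\mathcal{D}:T(\omega,\rho)\le\varepsilon\text{ for some }\rho\in\mathcal{P}\}$. Battery: qubit $B$ with basis $\{|0\rangle,|1\rangle\}$, $\pi_M=(1-\tfrac1M)|0\rangle\langle0|+\tfrac1M|1\rangle\langle1|$ for $M>1$. The one-shot work cost from a clean battery under a class $\mathfrak{F}$ is $\beta C_{\mathfrak{F},\varepsilon}(\mathcal{P},\mathcal{E})=\log\inf\{M>1:\exists\mathcal{F}\in\mathfrak{F},\ \exists(\rho,\tau)\in\mathcal{P}\times\mathcal{E}\text{ with }T(\mathcal{F}(|1\rangle\langle1|),\rho)\le\varepsilon\text{ and }\mathcal{F}(\pi_M)=\tau\}$. GPO here means the class of CPTP maps from $B$ to $P$, Gibbs preservation being the condition $\mathcal{F}(\pi_M)=\tau$. The smoothed max-relative entropy between sets is $D_{\max,\varepsilon}(\mathcal{P}\|\mathcal{E})=\log\inf\{M>1:\tau\in\mathcal{E},\ \omega\in\mathcal{B}_\varepsilon(\mathcal{P}),\ M\tau-\omega\ge0\}$. *)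

From HB Require Import structures.
From mathcomp Require Import all_boot all_order all_algebra.
From mathcomp Require Import all_classical all_reals.
From mathcomp Require Import ereal exp.
From mathcomp.real_closed Require Import complex mxtens.

Set Implicit Arguments.
Unset Strict Implicit.
Unset Printing Implicit Defensive.

Import Order.TTheory GRing.Theory Num.Theory.
Local Open Scope ring_scope.
Local Open Scope complex_scope.
Local Open Scope classical_set_scope.

Section QDefs.
Variable R : realType.
Local Notation C := R[i].

Definition hadj m n (A : 'M[C]_(m, n)) : 'M[C]_(n, m) := (map_mx Num.conj A)^T.

Definition psd n (A : 'M[C]_n) : Prop :=
  hadj A = A /\ forall v : 'cV[C]_n, 0 <= (hadj v *m A *m v) 0 0.

Definition density n : set 'M[C]_n := [set rho | psd rho /\ \tr rho = 1].

(* ||X||_1 = tr sqrt(X^* X), where sqrt is the (unique) PSD square root *)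
Definition is_trnorm n (X : 'M[C]_n) (t : R) : Prop :=
  exists S : 'M[C]_n, psd S /\ S *m S = hadj X *m X /\ t = complex.Re (\tr S).

Definition trnorm n (X : 'M[C]_n) : R := xget 0 [set t : R | is_trnorm X t].

Definition tdist n (X Y : 'M[C]_n) : R := trnorm (X - Y) / 2.

Definition ball_eps n (eps : R) (Pset : set 'M[C]_n) : set 'M[C]_n :=
  [set w | @density n w /\ exists2 rho, Pset rho & tdist w rho <= eps].

(* id_k (x) F applied to X : 'M_(k*m), using the Kronecker index (i,a) |-> i*m + a *)
Definition ampl k m n (F : 'M[C]_m -> 'M[C]_n) (X : 'M[C]_(k * m)) : 'M[C]_(k * n) :=
  \matrix_(a, b)
     (F (\matrix_(r, s) X (mxtens_index ((mxtens_unindex a).1, r))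
                          (mxtens_index ((mxtens_unindex b).1, s))))
       (mxtens_unindex a).2 (mxtens_unindex b).2.

Definition CPTP m n (F : 'M[C]_m -> 'M[C]_n) : Prop :=
  [/\ linear F,
      (forall k (X : 'M[C]_(k * m)), psd X -> psd (ampl F X)) &
      forall X, \tr (F X) = \tr X].

(* battery: qubit; |1><1| and pi_M *)
Definition ket1bra1 : 'M[C]_2 := delta_mx 1 1.
Definition piM (M : R) : 'M[C]_2 :=
  (1 - M^-1)%:C *: delta_mx 0 0 + (M^-1)%:C *: delta_mx 1 1.

(* logarithm extended to \bar R (only applied to values >= 1 or +oo) *)
Definition elog (x : \bar R) : \bar R :=
  match x with
  | EFin r => EFin (ln r)
  | +oo%E => +oo%E
  | -oo%E => -oo%E
  end.

(* beta C_{GPO,eps}(P, E): GPO = all CPTP maps B -> P, Gibbs preservation F(pi_M) = tau *)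
Definition workcost_GPO n (eps : R) (Pset Eset : set 'M[C]_n) : \bar R :=
  elog (ereal_inf [set x | exists M : R, x = M%:E /\ 1 < M /\
     exists F : 'M[C]_2 -> 'M[C]_n, CPTP F /\
     exists rho tau, Pset rho /\ Eset tau /\
       tdist (F ket1bra1) rho <= eps /\ F (piM M) = tau]).

Definition Dmax_eps n (eps : R) (Pset Eset : set 'M[C]_n) : \bar R :=
  elog (ereal_inf [set x | exists M : R, x = M%:E /\ 1 < M /\
     exists tau w, Eset tau /\ ball_eps eps Pset w /\ psd (M%:C *: tau - w)]).

End QDefs.
Arguments density {R} n.

From mathcomp Require Import all_boot all_order all_algebra.
From mathcomp Require Import all_classical all_reals.
From mathcomp Require Import ereal exp.
From mathcomp.real_closed Require Import complex mxtens.
From mathcomp Require Import spectral sesquilinear.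
From mathcomp.algebra_tactics Require Import ring.

(* Both infima range over the same set of M.  A GPO witness F yields the
   smoothed state w = F(|1><1|) with M tau - w = (M - 1) F(|0><0|) >= 0.
   Conversely, from tau and w with M tau - w >= 0 the normalised remainder
   s = (M tau - w) / (M - 1) is a state, and the measure-and-prepare channel
   |1><1| |-> w, |0><0| |-> s sends pi_M to w / M + (1 - 1/M) s = tau. *)

Set Implicit Arguments.
Unset Strict Implicit.
Unset Printing Implicit Defensive.
Import Order.TTheory GRing.Theory Num.Theory.
Local Open Scope ring_scope.
Local Open Scope complex_scope.
Local Open Scope classical_set_scope.

Section LinearFun.
Variables (K : pzRingType) (U V : lmodType K) (f : U -> V).
Hypothesis f_lin : linear f.

Lemma linear_fun0 : f 0 = 0.
Proof.
by have := f_lin 1 0 0; rewrite !scale1r addr0 -{1}[f 0]addr0 => /addrI.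
Qed.

Lemma linear_funZ a u : f (a *: u) = a *: f u.
Proof. by have := f_lin a u 0; rewrite !addr0 linear_fun0 addr0. Qed.

Lemma linear_funB u v : f (u - v) = f u - f v.
Proof. by rewrite addrC -scaleN1r f_lin scaleN1r addrC. Qed.

End LinearFun.

Section PositiveSemidefinite.
Variable R : realType.
Local Notation C := R[i].

Lemma hadjE m n (A : 'M[C]_(m, n)) i j : hadj A i j = Num.conj (A j i).
Proof. by rewrite /hadj !mxE. Qed.

Lemma hadjK m n (A : 'M[C]_(m, n)) : hadj (hadj A) = A.
Proof. by apply/matrixP => i j; rewrite !hadjE conjCK. Qed.

Lemma hadjD m n (A B : 'M[C]_(m, n)) : hadj (A + B) = hadj A + hadj B.
Proof. by apply/matrixP => i j; rewrite !mxE rmorphD. Qed.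

Lemma hadjZ m n (c : C) (A : 'M[C]_(m, n)) : hadj (c *: A) = Num.conj c *: hadj A.
Proof. by apply/matrixP => i j; rewrite !mxE rmorphM. Qed.

Lemma hadjM m n p (A : 'M[C]_(m, n)) (B : 'M[C]_(n, p)) :
  hadj (A *m B) = hadj B *m hadj A.
Proof.
apply/matrixP => i j; rewrite hadjE !mxE rmorph_sum; apply: eq_bigr => k _.
by rewrite rmorphM !hadjE mulrC.
Qed.

Lemma hadj_tensmx m n p q (A : 'M[C]_(m, n)) (B : 'M[C]_(p, q)) :
  hadj (A *t B) = hadj A *t hadj B.
Proof. by apply/matrixP => i j; rewrite hadjE !mxE rmorphM. Qed.

Lemma hadj_hermsymmx n (A : 'M[C]_n) : hadj A = A -> A \is hermsymmx.
Proof.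
move=> hA; apply/is_hermitianmxP.
by rewrite expr0 scale1r -[LHS]hA /hadj map_trmx.
Qed.

Lemma psd_gram m n (L : 'M[C]_(m, n)) : psd (hadj L *m L).
Proof.
split; first by rewrite hadjM hadjK.
move=> v; rewrite mulmxA -hadjM -mulmxA mxE.
by apply: sumr_ge0 => i _; rewrite hadjE mulrC mul_conjC_ge0.
Qed.

Lemma psdD n (A B : 'M[C]_n) : psd A -> psd B -> psd (A + B).
Proof.
move=> [hA qA] [hB qB]; split; first by rewrite hadjD hA hB.
by move=> v; rewrite mulmxDr mulmxDl mxE addr_ge0.
Qed.

Lemma psdZ n (c : C) (A : 'M[C]_n) : 0 <= c -> psd A -> psd (c *: A).
Proof.
move=> c0 [hA qA]; split; first by rewrite hadjZ geC0_conj // hA.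
by move=> v; rewrite -scalemxAr -scalemxAl mxE mulr_ge0.
Qed.

(* Spectral theorem: A = P^* diag(sp) P with P unitary and sp >= 0, so
   L = diag(sqrt sp) P works. *)
Lemma psd_gram_factor n (A : 'M[C]_n) :
  psd A -> exists L : 'M[C]_n, A = hadj L *m L.
Proof.
move=> [hA qA].
have /orthomx_spectralP := hermitian_normalmx (hadj_hermsymmx hA).
set P := spectralmx A; set sp := spectral_diag A => EA.
have PV : invmx P = hadj P.
  by rewrite invmx_unitary ?spectral_unitarymx // /hadj map_trmx.
have PPadj : P *m hadj P = 1%:M by rewrite -PV mulmxV // spectral_unit.
have diagE : P *m A *m hadj P = diag_mx sp.
  by rewrite EA PV !mulmxA PPadj mul1mx -!mulmxA PPadj mulmx1.
have sp_ge0 j : 0 <= sp 0 j.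
  have := qA (col j (hadj P)).
  suff -> : (hadj (col j (hadj P)) *m A *m col j (hadj P)) 0 0 = sp 0 j by [].
  have -> : sp 0 j = diag_mx sp j j by rewrite mxE eqxx mulr1n.
  rewrite -diagE !mxE; apply: eq_bigr => k _; rewrite !mxE; congr (_ * _).
  by apply: eq_bigr => l _; rewrite !mxE conjCK.
pose d := \row_j sqrtC (sp 0 j).
have hd : hadj (diag_mx d) = diag_mx d.
  apply/matrixP => i j; rewrite hadjE !mxE.
  case: (eqVneq i j) => [->|_]; last by rewrite !mulr0n rmorph0.
  by rewrite !mulr1n geC0_conj // sqrtC_ge0.
exists (diag_mx d *m P).
rewrite hadjM hd mulmxA -(mulmxA (hadj P)) mulmx_diag EA PV.
by congr (_ *m diag_mx _ *m _); apply/rowP => j; rewrite !mxE -expr2 sqrtCK.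
Qed.

Lemma psd_tensmx m n (A : 'M[C]_m) (B : 'M[C]_n) : psd A -> psd B -> psd (A *t B).
Proof.
move=> /psd_gram_factor [L ->] /psd_gram_factor [N ->].
by rewrite -tensmx_mul -hadj_tensmx; apply: psd_gram.
Qed.

Lemma psd_reindex m n (A : 'M[C]_m) (f : 'I_n -> 'I_m) :
  psd A -> psd (\matrix_(i, j) A (f i) (f j)).
Proof.
move=> /psd_gram_factor [L ->].
suff -> : \matrix_(i, j) (hadj L *m L) (f i) (f j) =
          hadj (\matrix_(r, j) L r (f j)) *m \matrix_(r, j) L r (f j).
  exact: psd_gram.
by apply/matrixP => i j; rewrite !mxE; apply: eq_bigr => k _; rewrite !hadjE !mxE.
Qed.

Lemma psd_delta_mx n (i : 'I_n) : psd (delta_mx i i : 'M[C]_n).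
Proof.
suff -> : delta_mx i i = hadj (delta_mx 0 i : 'M[C]_(1, n)) *m delta_mx 0 i.
  exact: psd_gram.
suff -> : hadj (delta_mx 0 i : 'M[C]_(1, n)) = delta_mx i 0.
  by rewrite mul_delta_mx.
apply/matrixP => a b; rewrite hadjE !mxE.
by case: (_ == _); case: (_ == _); rewrite ?rmorph1 ?rmorph0.
Qed.

End PositiveSemidefinite.

Lemma mxtrace_mx2 (K : pzSemiRingType) (A : 'M[K]_2) : \tr A = A 0 0 + A 1 1.
Proof.
rewrite /mxtrace big_ord_recl big_ord1.
by congr (_ + A _ _); apply: val_inj.
Qed.

Section Channels.
Variable R : realType.
Local Notation C := R[i].

Lemma CPTP_psd m n (F : 'M[C]_m -> 'M[C]_n) Y : CPTP F -> psd Y -> psd (F Y).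
Proof.
case=> _ F_cp _ psdY.
pose X : 'M[C]_(1 * m) :=
  \matrix_(a, b) Y (mxtens_unindex a).2 (mxtens_unindex b).2.
have psdX : psd X := psd_reindex (fun a => (mxtens_unindex a).2) psdY.
have := psd_reindex (fun i => mxtens_index (ord0 : 'I_1, i)) (F_cp 1%N X psdX).
congr psd; apply/matrixP => i j; rewrite /ampl !mxE !mxtens_indexK /=.
by congr (F _ _ _); apply/matrixP => r s; rewrite !mxE !mxtens_indexK.
Qed.

Lemma CPTP_density m n (F : 'M[C]_m -> 'M[C]_n) X :
  CPTP F -> density m X -> density n (F X).
Proof.
by move=> F_cptp [psdX trX]; split; [apply: CPTP_psd | case: F_cptp => _ _ ->].
Qed.

Lemma density_ket1bra1 : density 2%N (ket1bra1 R).
Proof.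
split; first exact: psd_delta_mx.
by rewrite /ket1bra1 mxtrace_mx2 !mxE /= add0r.
Qed.

Definition measure_prepare n (w s : 'M[C]_n) (X : 'M[C]_2) : 'M[C]_n :=
  X 1 1 *: w + X 0 0 *: s.

Lemma measure_prepare_CPTP n (w s : 'M[C]_n) :
  density n w -> density n s -> CPTP (measure_prepare w s).
Proof.
move=> [psdw trw] [psds trs]; split.
- move=> a X Y; rewrite /measure_prepare !mxE !scalerDl scalerDr !scalerA.
  by rewrite addrACA.
- move=> k X psdX.
  have -> : ampl (measure_prepare w s) X =
      (\matrix_(i, j) X (mxtens_index (i, 1)) (mxtens_index (j, 1))) *t w +
      (\matrix_(i, j) X (mxtens_index (i, 0)) (mxtens_index (j, 0))) *t s.
    by apply/matrixP => a b; rewrite !mxE.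
  by apply: psdD; apply: psd_tensmx => //; apply: psd_reindex.
- by move=> X; rewrite mxtraceD !mxtraceZ trw trs !mulr1 addrC mxtrace_mx2.
Qed.

Lemma measure_prepare_ket1bra1 n (w s : 'M[C]_n) :
  measure_prepare w s (ket1bra1 R) = w.
Proof. by rewrite /measure_prepare !mxE scale1r scale0r addr0. Qed.

Lemma measure_prepare_piM n (w s : 'M[C]_n) M :
  measure_prepare w s (piM M) = (M^-1)%:C *: w + (1 - M^-1)%:C *: s.
Proof. by rewrite /measure_prepare /piM !mxE !mulr0 !mulr1 add0r addr0. Qed.

Lemma scale_piM_sub_ket1bra1 M : 1 < M ->
  M%:C *: piM M - ket1bra1 R = (M - 1)%:C *: delta_mx 0 0.
Proof.
move=> M_gt1; have M_neq0 : M != 0 by rewrite gt_eqF // (lt_trans ltr01).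
rewrite /piM /ket1bra1 scalerDr !scalerA -!rmorphM mulrBr mulr1 divff //.
by rewrite rmorph1 scale1r addrK.
Qed.

End Channels.

Section Feasibility.
Variables (R : realType) (n : nat) (eps : R) (Pset : set 'M[R[i]]_n).
Local Notation C := R[i].

Lemma GPO_feasible_smoothing (F : 'M[C]_2 -> 'M[C]_n) rho M :
  1 < M -> CPTP F -> Pset rho -> tdist (F (ket1bra1 R)) rho <= eps ->
  ball_eps eps Pset (F (ket1bra1 R)) /\ psd (M%:C *: F (piM M) - F (ket1bra1 R)).
Proof.
move=> M_gt1 F_cptp Prho close; split.
  by split; [exact: CPTP_density F_cptp (density_ket1bra1 R) | exists rho].
have [F_lin _ _] := F_cptp.
rewrite -(linear_funZ F_lin) -(linear_funB F_lin) scale_piM_sub_ket1bra1 //.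
rewrite (linear_funZ F_lin).
apply: psdZ; first by rewrite ler0c subr_ge0 ltW.
exact: CPTP_psd (psd_delta_mx _ _).
Qed.

Lemma density_remainder (tau w : 'M[C]_n) M :
  1 < M -> density n tau -> density n w -> psd (M%:C *: tau - w) ->
  density n ((M - 1)^-1%:C *: (M%:C *: tau - w)).
Proof.
move=> M_gt1 [_ trtau] [_ trw] psd_rem; split.
  by apply: psdZ psd_rem; rewrite ler0c invr_ge0 subr_ge0 ltW.
rewrite mxtraceZ linearB /= mxtraceZ trtau trw mulr1 -(rmorph1 (real_complex R)).
by rewrite -rmorphB -rmorphM mulVf // subr_eq0 gt_eqF.
Qed.

Lemma smoothing_feasible_GPO (tau w : 'M[C]_n) M :
  1 < M -> density n tau -> density n w -> psd (M%:C *: tau - w) ->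
  exists2 F : 'M[C]_2 -> 'M[C]_n, CPTP F & F (ket1bra1 R) = w /\ F (piM M) = tau.
Proof.
move=> M_gt1 Dtau Dw psd_rem.
have M_neq0 : M != 0 by rewrite gt_eqF // (lt_trans ltr01).
have M1_neq0 : M - 1 != 0 by rewrite subr_eq0 gt_eqF.
exists (measure_prepare w ((M - 1)^-1%:C *: (M%:C *: tau - w))).
  exact/measure_prepare_CPTP/density_remainder.
split; first exact: measure_prepare_ket1bra1.
rewrite measure_prepare_piM !scalerBr !scalerA -!rmorphM.
have -> : (1 - M^-1) * (M - 1)^-1 = M^-1 by field; rewrite M_neq0 M1_neq0.
by rewrite mulVf // rmorph1 scale1r addrC subrK.
Qed.

End Feasibility.

Theorem theorem5 (R : realType) (n : nat) (eps : R)
  (Pset Eset : set 'M[R[i]]_n) :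
  0 <= eps -> eps < 1 ->
  Pset `<=` density n -> Eset `<=` density n ->
  workcost_GPO eps Pset Eset = Dmax_eps eps Pset Eset.
Proof.
move=> _ _ _ E_density; congr (elog (ereal_inf _)).
apply/seteqP; split=> _ /= [M [-> [M_gt1 feasible]]]; exists M; do 2!split=> //.
- have [F [F_cptp [rho [tau [Prho [Etau [close Ftau]]]]]]] := feasible.
  have [Bw psd_rem] := GPO_feasible_smoothing M_gt1 F_cptp Prho close.
  by rewrite Ftau in psd_rem; exists tau, (F (ket1bra1 R)).
- have [tau [w [Etau [Bw psd_rem]]]] := feasible.
  have [[Dw _] Dtau] := (Bw, E_density _ Etau).
  have [F F_cptp [Fw Ftau]] := smoothing_feasible_GPO M_gt1 Dtau Dw psd_rem.
  have [_ [rho Prho close]] := Bw.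
  by exists F; split=> //; exists rho, tau; rewrite Fw.
Qed.
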